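(* Let $q$ be a prime power and let $\mathcal{C}$ be a $\mathcal{GRS}(n,k,d)$ code over $\mathbb{F}_q$ with $d=n-k+1$, distinct evaluation points $\alpha_0,\dots,\alpha_{n-1}\in\mathbb{F}_q$ and non-zero column multipliers $v_0,\dots,v_{n-1}$. Let $\vec c\in\mathcal{C}$ and $\vec r\in\mathbb{F}_q^n$, let $E=\{i : c_i\neq r_i\}$, $\epsilon=|E|$, and assume $\epsilon>d/2$. Let $\Lambda(x)=\prod_{i\in E}(x-\alpha_i)$. Let $H_1(x),H_2(x)\in\mathbb{F}_q[x]$ be coprime polynomials and $A(x),B(x)\in\mathbb{F}_q[x]$ polynomials such that $$\Lambda(x)=A(x)H_1(x)+B(x)H_2(x),\qquad \deg A=\epsilon-\deg H_1,\qquad \deg B\le \epsilon-d+\deg H_1 .$$ Let $L\le n$, $\tau$ and $\tau_L$ be positive integers, put $w_1=\tau-\deg H_1$ and $w_2=\tau-d+\deg H_1$, and assume $w_1,w_2\ge 0$. For $i=0,\dots,L-1$ let $P_i=(H_2(\alpha_i):-H_1(\alpha_i))\in\mathbb{P}^1_{\mathbb{F}_q}$. If $$\tau_L^2>L(2\tau-d),$$ then there exist positive integers $s,\ell$ and a non-zero polynomial $Q(x,y,z)=\sum_{j=0}^{\ell}Q_j(x)y^jz^{\ell-j}$ with $Q_j\in\mathbb{F}_q[x]$ such that $Q$ has a zero of multiplicity at least $s$ at $(\alpha_i,P_i)$ for every $i=0,\dots,L-1$ and $\deg_{(1,w_1,w_2)}Q<s\tau_L$. Furthermore, letting $\epsilon_L=|E\cap\{0,\dots,L-1\}|$,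 if $\epsilon=\tau$ and $\epsilon_L=\tau_L$, then every such $Q$ satisfies $Q(x,A(x),B(x))=0$.
   Context: A generalised Reed–Solomon code $\mathcal{GRS}(n,k,d)$ over $\mathbb{F}_q$ is $\{(v_0C(\alpha_0),\dots,v_{n-1}C(\alpha_{n-1})) : C\in\mathbb{F}_q[x],\ \deg C<k\}$. In the paper, $H_1,H_2$ are intermediate polynomials of the Extended Euclidean Algorithm run on $x^{d-1}$ and the syndrome polynomial of $\vec r$, and positions are indexed so that positions $0,\dots,L-1$ are the $L$ least reliable ones; only the stated properties are used. Points of $\mathbb{P}^1_{\mathbb{F}_q}$ are pairs $(a:b)\neq(0:0)$ up to non-zero scalar multiples. The $(1,w_1,w_2)$-weighted degree of $x^uy^jz^h$ is $u+w_1j+w_2h$, and of a polynomial the maximum over its monomials. A homogeneous $Q(x,y,z)$ has a zero of multiplicity at least $s$ at $(\alpha,(a:b))\in\mathbb{F}_q\times\mathbb{P}^1_{\mathbb{F}_q}$ if: when $b\neq0$, the polynomial $Q(x+\alpha,\,y+a/b,\,1)\in\mathbb{F}_q[x,y]$ has no monomial $x^uy^v$ with $u+v<s$; when $b=0$, the polynomial $Q(x+\alpha,1,z+0)\in\mathbb{F}_q[x,z]$ has no monomial $x^uz^v$ with $u+v<s$. *)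

From HB Require Import structures.
From mathcomp Require Import all_boot all_order all_algebra all_field.
Set Implicit Arguments. Unset Strict Implicit. Unset Printing Implicit Defensive.
Import Order.TTheory GRing.Theory Num.Theory.
Local Open Scope ring_scope.

(* A homogeneous polynomial Q(x,y,z) = \sum_{j=0}^{l} Q_j(x) y^j z^(l-j)
   is represented by l and its coefficient family Qs : 'I_l.+1 -> {poly F}. *)

(* Q(x+alpha, y+c, 1) as a bivariate polynomial: outer variable y,
   inner coefficients are polynomials in x. *)
Definition dehom_z (F : fieldType) (l : nat) (Qs : 'I_l.+1 -> {poly F})
  (alpha c : F) : {poly {poly F}} :=
  \sum_(j < l.+1) (Qs j \Po ('X + alpha%:P))%:P * ('X + c%:P%:P) ^+ j.

(* Q(x+alpha, 1, z+0) as a bivariate polynomial: outer variable z. *)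
Definition dehom_y (F : fieldType) (l : nat) (Qs : 'I_l.+1 -> {poly F})
  (alpha : F) : {poly {poly F}} :=
  \sum_(j < l.+1) (Qs j \Po ('X + alpha%:P))%:P * 'X ^+ (l - j).

Definition no_low_monomials (F : fieldType) (P : {poly {poly F}}) (s : nat) :=
  forall u v : nat, (u + v < s)%N -> (P`_v)`_u = 0.

(* Q has a zero of multiplicity at least s at (alpha, (a:b)). *)
Definition mult_at_least (F : fieldType) (l : nat) (Qs : 'I_l.+1 -> {poly F})
  (alpha a b : F) (s : nat) : Prop :=
  if b != 0 then no_low_monomials (dehom_z Qs alpha (a / b)) s
  else no_low_monomials (dehom_y Qs alpha) s.

Definition wdeg_lt (F : fieldType) (l : nat) (Qs : 'I_l.+1 -> {poly F})
  (w1 w2 bound : int) : Prop :=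
  forall (j : 'I_l.+1) (u : nat), (Qs j)`_u != 0 ->
    (u%:Z + w1 * (j : nat)%:Z + w2 * (l - j)%N%:Z < bound)%R.

Definition hpoly_nonzero (F : fieldType) (l : nat) (Qs : 'I_l.+1 -> {poly F}) :=
  exists j, Qs j != 0.

Definition hsubst (F : fieldType) (l : nat) (Qs : 'I_l.+1 -> {poly F})
  (A B : {poly F}) : {poly F} :=
  \sum_(j < l.+1) Qs j * A ^+ j * B ^+ (l - j).

From HB Require Import structures.
From mathcomp Require Import all_boot all_order all_algebra all_field.
From mathcomp Require Import zify ring.
Set Implicit Arguments.
Unset Strict Implicit.
Unset Printing Implicit Defensive.
Import Order.TTheory GRing.Theory Num.Theory.

(* Existence: a zero of multiplicity s at the L points imposes L s (s + 1) / 2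
   linear conditions on the coefficients of Q, while at least
   (l + 1) (s tauL - (w1 + w2) l / 2) monomials have weighted degree below
   s tauL; since w1 + w2 = 2 tau - d and tauL ^ 2 > L (2 tau - d), the unknowns
   outnumber the conditions for suitable s and l.
   Vanishing: at an error position Lambda (alpha_i) = 0 forces
   (A (alpha_i) : B (alpha_i)) = P_i, so (x - alpha_i) ^ s divides Q (x, A, B).
   The tauL error positions among the first L give s tauL roots counted with
   multiplicity, while the weighted degree bound keeps deg Q (x, A, B) below
   s tauL. *)

Lemma card_pairs (A B : finType) (P : A -> B -> bool) :
  #|[set p : A * B | P p.1 p.2]| = \sum_(a : A) #|[set b | P a b]|.
Proof.
rewrite -sum1_card (eq_bigl (fun p : A * B => true && P p.1 p.2)) => [|p]; last by rewrite inE.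
rewrite -(pair_big_dep xpredT P (fun _ _ => 1)); apply: eq_bigr => a _.
by rewrite -sum1_card; apply: eq_bigl => b; rewrite inE.
Qed.

Lemma card_ord_lt N m : #|[set u : 'I_N | u < m]| = minn m N.
Proof.
rewrite -sum1_card big_mkcond /= (eq_bigr (fun u : 'I_N => nat_of_bool (u < m))) => [|u _];
  last by rewrite inE; case: (u < m).
rewrite -(big_mkord xpredT (fun u => nat_of_bool (u < m))).
elim: N => [|N IHN]; first by rewrite big_geq ?minn0.
by rewrite big_nat_recr //= IHN; case: (ltnP N m) => /=; lia.
Qed.

Lemma sum_ord_double l : \sum_(j < l.+1) j * 2 = l * l.+1.
Proof. by elim: l => [|l IHl]; rewrite ?big_ord1 // big_ord_recr /= IHl; lia. Qed.

Lemma sum_ord_rev_double l : \sum_(j < l.+1) (l - j) * 2 = l * l.+1.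
Proof.
rewrite -sum_ord_double (reindex_inj rev_ord_inj); apply: eq_bigr => j _.
by rewrite /= subSS subKn // -ltnS.
Qed.

Lemma sum_weights_double l n1 n2 :
  (\sum_(j < l.+1) (n1 * j + n2 * (l - j))) * 2 = (n1 + n2) * (l * l.+1).
Proof.
rewrite big_distrl (eq_bigr (fun j : 'I_l.+1 => n1 * (j * 2) + n2 * ((l - j) * 2)))
  => [|j _]; last by rewrite -[LHS]/((n1 * j + n2 * (l - j)) * 2) mulnDl !mulnA.
by rewrite big_split -!big_distrr /= sum_ord_double sum_ord_rev_double mulnDl.
Qed.

(* For W > 0, the choice s = t W, l = t T with t = L + 1 reduces the
   inequality to L (t W + 1) < T (t T + 1), which follows from L W < T ^ 2. *)
Lemma exists_interpolation_params L W T : 0 < T -> L * W < T ^ 2 ->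
  exists s l, [/\ 0 < s, 0 < l & L * (s * s.+1) + W * (l * l.+1) < 2 * (l.+1 * (s * T))].
Proof.
move=> T_gt0 LW_lt.
have [->|W_gt0] := posnP W; first by exists 1, L.+1; split=> //; nia.
set t := L.+1; exists (t * W), (t * T); split; [nia|nia|].
have key : L * (t * W).+1 < T * (t * T).+1.
  have : t * (L * W).+1 <= t * T ^ 2 by rewrite leq_mul2l LW_lt orbT.
  rewrite /t; nia.
have -> : L * (t * W * (t * W).+1) + W * (t * T * (t * T).+1) =
          t * W * (L * (t * W).+1 + T * (t * T).+1) by ring.
have -> : 2 * ((t * T).+1 * (t * W * T)) = t * W * (2 * (T * (t * T).+1)) by ring.
by rewrite ltn_pmul2l ?muln_gt0 ?W_gt0 //; lia.
Qed.

Local Open Scope ring_scope.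

Section IdomainDivisibility.
Variable R : idomainType.
Implicit Types p q d : {poly R}.

Lemma dvdp_sum (I : Type) (r : seq I) (P : pred I) d (G : I -> {poly R}) :
  (forall i, P i -> d %| G i) -> d %| \sum_(i <- r | P i) G i.
Proof. by move=> dG; elim/big_ind: _ => // x y; apply: dvdp_add. Qed.

Lemma Xn_dvdp_low_coef m p : (forall u, (u < m)%N -> p`_u = 0) -> 'X^m %| p.
Proof.
move=> p_low; rewrite -(poly_take_drop m p).
suff -> : take_poly m p = 0 by rewrite add0r dvdp_mull.
by apply/polyP => i; rewrite coef_take_poly coef0; case: ifP => // /p_low.
Qed.

Lemma Xn_dvdp_exp m p : p`_0 = 0 -> 'X^m %| p ^+ m.
Proof.
move=> p0; apply: dvdp_exp2r; apply: (@Xn_dvdp_low_coef 1) => u.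
by rewrite ltnS leqn0 => /eqP ->.
Qed.

Lemma Xn_dvdp_mul k m p q : 'X^(k - m) %| p -> 'X^m %| q -> 'X^k %| p * q.
Proof.
move=> dp dq; apply: dvdp_trans (dvdp_mul dp dq).
by rewrite -exprD; apply: dvdp_exp2l; lia.
Qed.

Lemma dvdp_XsubC_exp_shift a s p :
  'X^s %| p \Po ('X + a%:P) -> ('X - a%:P) ^+ s %| p.
Proof.
move=> dvd_p; rewrite -[p](comp_polyXaddC_K _ a) -comp_Xn_poly.
exact: dvdp_comp_poly.
Qed.

End IdomainDivisibility.

Lemma dvdp_prod_XsubC_exp (F : fieldType) (r : seq F) s (p : {poly F}) : uniq r ->
  (forall a, a \in r -> ('X - a%:P) ^+ s %| p) ->
  (\prod_(a <- r) ('X - a%:P)) ^+ s %| p.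
Proof.
elim: r => [|a r IHr] /=; first by rewrite big_nil expr1n dvd1p.
case/andP => a_r r_uniq dvd_p.
have cop : coprimep (('X - a%:P) ^+ s) ((\prod_(b <- r) ('X - b%:P)) ^+ s).
  apply/coprimep_expl/coprimep_expr.
  by rewrite coprimep_sym coprimep_XsubC root_prod_XsubC.
rewrite big_cons exprMn Gauss_dvdp // dvd_p ?mem_head //=.
by apply: IHr => // b b_r; apply: dvd_p; rewrite in_cons b_r orbT.
Qed.

Section Binomial.
Variable R : comNzRingType.

Lemma coef_XaddC_exp (c : R) j v :
  (('X + c%:P) ^+ j)`_v = c ^+ (j - v) *+ 'C(j, v).
Proof.
rewrite addrC exprDn coef_sum.
under eq_bigr => i _ do rewrite coefMn -polyC_exp coefCM coefXn.
case: (ltnP v j.+1) => hv.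
  rewrite (bigD1 (Ordinal hv)) //= eqxx mulr1 big1 ?addr0 // => i /eqP hi.
  have : (v != i)%N by apply/eqP => e; apply: hi; apply: val_inj.
  by move/negPf ->; rewrite mulr0 mul0rn.
rewrite bin_small // mulr0n big1 // => i _.
have : (v != i)%N by apply/eqP => e; move: (ltn_ord i); rewrite -e ltnNge hv.
by move/negPf ->; rewrite mulr0 mul0rn.
Qed.

Lemma sum_coef_XaddC_exp (c e b : R) j l : (j <= l)%N ->
  \sum_(v < l.+1) (('X + c%:P) ^+ j)`_v * e ^+ v * b ^+ (l - v)
  = (e + c * b) ^+ j * b ^+ (l - j).
Proof.
move=> jl; under eq_bigr => v _ do rewrite coef_XaddC_exp.
rewrite (bigID (fun v : 'I_l.+1 => (v < j.+1)%N)) /= [X in _ + X]big1 ?addr0; last first.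
  by move=> v; rewrite -leqNgt => jv; rewrite bin_small // !mulr0n !mul0r.
rewrite -(big_ord_widen l.+1 (fun v => c ^+ (j - v) *+ 'C(j, v) * e ^+ v * b ^+ (l - v))) //.
rewrite (addrC e) exprDn mulr_suml; apply: eq_bigr => i _.
have ij := ltn_ord i; have -> : (l - i = (j - i) + (l - j))%N by lia.
rewrite exprD exprMn; ring.
Qed.

End Binomial.

Section Multiplicity.
Variables (F : fieldType) (l : nat).
Implicit Types (Qs : 'I_l.+1 -> {poly F}) (A B : {poly F}).

Definition dehom Qs (al a b : F) : {poly {poly F}} :=
  if b != 0 then dehom_z Qs al (a / b) else dehom_y Qs al.

Lemma mult_at_leastE Qs al a b s :
  mult_at_least Qs al a b s = no_low_monomials (dehom Qs al a b) s.
Proof. by rewrite /mult_at_least /dehom; case: ifP. Qed.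

Lemma dehomB Qs Qs1 Qs2 al a b : (forall j, Qs j = Qs1 j - Qs2 j) ->
  dehom Qs al a b = dehom Qs1 al a b - dehom Qs2 al a b.
Proof.
move=> QsB; rewrite /dehom /dehom_z /dehom_y; case: ifP => _; rewrite -sumrB;
  by apply: eq_bigr => j _; rewrite QsB comp_polyB polyCB mulrBl.
Qed.

Lemma hsubst_comp Qs A B p :
  hsubst Qs A B \Po p = hsubst (fun j => Qs j \Po p) (A \Po p) (B \Po p).
Proof.
rewrite /hsubst linear_sum; apply: eq_bigr => j _.
by rewrite !rmorphM !rmorphXn.
Qed.

Variable al : F.
Let S : {poly F} := 'X + al%:P.

Lemma hsubst_dehom_z Qs (c : F) e b :
  hsubst (fun j => Qs j \Po S) (e + c%:P * b) b
  = \sum_(v < l.+1) (dehom_z Qs al c)`_v * e ^+ v * b ^+ (l - v).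
Proof.
rewrite /hsubst /dehom_z.
under eq_bigr => j _.
  rewrite -mulrA -(@sum_coef_XaddC_exp _ c%:P e b j l (ltnSE (ltn_ord j))) mulr_sumr.
over.
rewrite exchange_big /=; apply: eq_bigr => v _.
rewrite coef_sum !mulr_suml; apply: eq_bigr => j _.
by rewrite coefCM !mulrA.
Qed.

Lemma coef_dehom_y Qs (j : 'I_l.+1) : (dehom_y Qs al)`_(l - j) = Qs j \Po S.
Proof.
rewrite /dehom_y coef_sum (bigD1 j) //= coefCM coefXn eqxx mulr1 big1 ?addr0 //.
move=> i ij; rewrite coefCM coefXn; case: eqP => [lij|]; last by rewrite mulr0.
by case/eqP: ij; apply: val_inj; move: (ltn_ord i) (ltn_ord j) lij => /=; lia.
Qed.

Lemma mult_at_least_dvdp Qs A B (h1 h2 : F) s :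
  (h1 != 0) || (h2 != 0) -> A.[al] * h1 + B.[al] * h2 = 0 ->
  mult_at_least Qs al h2 (- h1) s -> ('X - al%:P) ^+ s %| hsubst Qs A B.
Proof.
move=> h_nz AB_root; rewrite /mult_at_least oppr_eq0 => low.
apply: dvdp_XsubC_exp_shift; rewrite hsubst_comp.
have coef0S p : (p \Po S)`_0 = p.[al].
  by rewrite -horner_coef0 horner_comp !hornerE.
case: ifP low => [h1_nz | /negbFE/eqP h1_0] low.
(* e vanishes at 0 because (A (al) : B (al)) = (h2 : - h1), and in the expansion
   of Q (x + al, e + c B, B) in powers of e the coefficient of e ^ v is divisible
   by x ^ (s - v). *)
- set c := h2 / - h1; set e := A \Po S - c%:P * (B \Po S).
  have e0 : e`_0 = 0.
    rewrite coefB coefCM !coef0S /c.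
    have -> : A.[al] - h2 / - h1 * B.[al] = (A.[al] * h1 + B.[al] * h2) / h1.
      by field; rewrite oppr_eq0 h1_nz.
    by rewrite AB_root mul0r.
  rewrite -[A \Po S](subrK (c%:P * (B \Po S))) -/e hsubst_dehom_z.
  apply: dvdp_sum => v _; apply/dvdp_mulr/(@Xn_dvdp_mul _ _ v); last exact: Xn_dvdp_exp.
  by apply: Xn_dvdp_low_coef => u uv; apply: low; lia.
- have B0 : B.[al] = 0.
    move: h_nz AB_root; rewrite h1_0 eqxx mulr0 add0r /= => h2_nz /eqP.
    by rewrite mulf_eq0 (negPf h2_nz) orbF => /eqP.
  apply: dvdp_sum => j _; apply: (@Xn_dvdp_mul _ _ (l - j)); last by apply: Xn_dvdp_exp; rewrite coef0S.
  apply/dvdp_mulr/Xn_dvdp_low_coef => u u_lt; rewrite -coef_dehom_y; apply: low; lia.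
Qed.

End Multiplicity.

Lemma size_hsubst_leq (F : fieldType) l (Qs : 'I_l.+1 -> {poly F}) (A B : {poly F})
    (n1 n2 m : nat) :
  ((size A).-1 <= n1)%N -> ((size B).-1 <= n2)%N ->
  (forall (j : 'I_l.+1) u, (Qs j)`_u != 0 -> (u + n1 * j + n2 * (l - j) < m)%N) ->
  (size (hsubst Qs A B) <= m)%N.
Proof.
move=> szA szB wdeg; rewrite /hsubst.
elim/big_ind: _ => [|p q sp sq|j _]; first by rewrite size_poly0.
  by rewrite (leq_trans (size_polyD _ _)) // geq_max sp sq.
have [->|Qj_nz] := eqVneq (Qs j) 0; first by rewrite !mul0r size_poly0.
have := wdeg j (size (Qs j)).-1; rewrite -lead_coefE lead_coef_eq0 Qj_nz => /(_ isT).
have := size_polyMleq (Qs j * A ^+ j) (B ^+ (l - j)).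
have := size_polyMleq (Qs j) (A ^+ j).
have := size_poly_exp_leq A j; have := size_poly_exp_leq B (l - j).
have := leq_mul szA (leqnn j); have := leq_mul szB (leqnn (l - j)).
have := size_poly_gt0 (Qs j); rewrite Qj_nz; lia.
Qed.

Lemma hsubst_eq0 (F : fieldType) n (alpha : 'I_n -> F) (P : {set 'I_n})
    (H1 H2 A B : {poly F}) l (Qs : 'I_l.+1 -> {poly F}) s :
  injective alpha -> coprimep H1 H2 ->
  {in P, forall i, A.[alpha i] * H1.[alpha i] + B.[alpha i] * H2.[alpha i] = 0} ->
  {in P, forall i, mult_at_least Qs (alpha i) H2.[alpha i] (- H1.[alpha i]) s} ->
  (size (hsubst Qs A B) <= s * #|P|)%N -> hsubst Qs A B = 0.
Proof.
move=> alpha_inj cop AB_root mult size_le.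
set r := [seq alpha i | i <- enum P].
have dvd : (\prod_(a <- r) ('X - a%:P)) ^+ s %| hsubst Qs A B.
  apply: dvdp_prod_XsubC_exp; first by rewrite map_inj_uniq ?enum_uniq.
  move=> a /mapP[i]; rewrite mem_enum => iP ->.
  apply: mult_at_least_dvdp (AB_root i iP) (mult i iP).
  have [H1_0|] //= := eqVneq H1.[alpha i] 0.
  by apply: coprimep_root cop _; rewrite /root H1_0.
apply/eqP; apply: contraTT size_le => nz; rewrite -ltnNge.
have prod_nz : \prod_(a <- r) ('X - a%:P) != 0 by rewrite monic_neq0 ?monic_prod_XsubC.
rewrite (leq_trans _ (dvdp_leq nz dvd)) // polySpred ?expf_neq0 // size_exp.
by rewrite size_prod_XsubC size_map -cardE mulnC.
Qed.

Lemma additive_ffun_kernel (R : finNzRingType) (I J : finType) (D : {set I}) (K : {set J})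
    (f : {ffun I -> R} -> {ffun J -> R}) :
  {morph f : x y / x - y} -> (forall x j, j \notin K -> f x j = 0) -> (#|K| < #|D|)%N ->
  exists z, [/\ z != 0, f z = 0 & forall i, i \notin D -> z i = 0].
Proof.
move=> fB f_K KD; pose S := pffun_on (0 : R) D predT.
have R_gt1 : (1 < #|(predT : {pred R})|)%N.
  by apply/card_gt1P; exists 0, 1; rewrite !inE eq_sym oner_neq0.
have /dinjectivePn[x xS [y /andP[yx yS] fxy]] : ~~ dinjectiveb f S.
  apply: contraTN KD => /dinjectiveP f_inj; rewrite -leqNgt -(leq_exp2l _ _ R_gt1).
  rewrite -(card_pffun_on 0 D) -(card_pffun_on 0 K) -/S -(card_in_image f_inj).
  apply: subset_leq_card.
  apply/subsetP => _ /imageP[x _ ->]; apply/pffun_onP; split=> //.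
  by apply/subsetP => j; apply: contraTT => /(f_K x) fxj; rewrite inE fxj eqxx.
have supp_D z : z \in S -> forall i, i \notin D -> z i = 0.
  case/pffun_onP => /subsetP zD _ i; apply: contraNeq => zi.
  by apply: zD; rewrite inE.
exists (x - y); split.
- by apply: contra yx; rewrite subr_eq0 eq_sym.
- by rewrite fB fxy subrr.
- by move=> i iD; rewrite !ffunE (supp_D x) ?(supp_D y) ?subrr.
Qed.

Section Interpolation.
Variables (F : finFieldType) (n : nat) (alpha : 'I_n -> F) (H1 H2 : {poly F}).
Variables (L n1 n2 T s l : nat).
Hypothesis L_le_n : (L <= n)%N.

Let N := (s * T).+1.

Definition hpoly_of (z : {ffun 'I_l.+1 * 'I_N -> F}) (j : 'I_l.+1) : {poly F} :=
  \poly_(u < N) z (j, inord u).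

Definition low_wdeg_monomials :=
  [set p : 'I_l.+1 * 'I_N | p.2 + n1 * p.1 + n2 * (l - p.1) < s * T]%N.

Definition mult_conditions := [set p : ('I_L * 'I_s) * 'I_s | p.1.2 + p.2 < s]%N.

Definition mult_coefs (z : {ffun 'I_l.+1 * 'I_N -> F}) : {ffun ('I_L * 'I_s) * 'I_s -> F} :=
  [ffun p => if p \in mult_conditions then
     let a := alpha (widen_ord L_le_n p.1.1) in
     ((dehom (hpoly_of z) a H2.[a] (- H1.[a]))`_p.2)`_p.1.2
   else 0].

Lemma mult_coefsB : {morph mult_coefs : x y / x - y}.
Proof.
move=> x y; apply/ffunP => p; rewrite !ffunE; case: ifP => _ /=; last by rewrite subr0.
rewrite (@dehomB _ _ _ (hpoly_of x) (hpoly_of y)) ?coefB // => j.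
by apply/polyP => u; rewrite coefB !coef_poly; case: ifP; rewrite ?subr0 ?ffunE.
Qed.

Local Close Scope ring_scope.

Lemma card_low_wdeg_monomials :
  l.+1 * (s * T) <= #|low_wdeg_monomials| + \sum_(j < l.+1) (n1 * j + n2 * (l - j)).
Proof.
rewrite (card_pairs (fun (j : 'I_l.+1) (u : 'I_N) => u + n1 * j + n2 * (l - j) < s * T)).
have -> : l.+1 * (s * T) = \sum_(j < l.+1) s * T by rewrite sum_nat_const card_ord.
rewrite -big_split /=; apply: leq_sum => j _.
rewrite (eq_finset (fun u : 'I_N => u < s * T - (n1 * j + n2 * (l - j)))) => [|u].
  by rewrite card_ord_lt /N; lia.
by apply/idP/idP; lia.
Qed.

Lemma card_mult_conditions : #|mult_conditions| * 2 = L * (s * s.+1).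
Proof.
rewrite (card_pairs (fun (p : 'I_L * 'I_s) (v : 'I_s) => p.2 + v < s)).
rewrite (eq_bigr (fun p : 'I_L * 'I_s => s - p.2)) => [|p _]; last first.
  rewrite (eq_finset (fun v : 'I_s => v < s - p.2)) ?card_ord_lt => [|v]; first by lia.
  by apply/idP/idP; lia.
rewrite -(pair_bigA _ (fun _ (u : 'I_s) => s - u)) /= sum_nat_const card_ord -mulnA.
by rewrite -(sum_ord_rev_double s) big_ord_recr /= subnn mul0n addn0 big_distrl.
Qed.

Lemma exists_interpolation :
  L * (s * s.+1) + (n1 + n2) * (l * l.+1) < 2 * (l.+1 * (s * T)) ->
  exists Qs : 'I_l.+1 -> {poly F},
  [/\ hpoly_nonzero Qs,
      forall i : 'I_n, i < L -> mult_at_least Qs (alpha i) H2.[alpha i] (- H1.[alpha i]) s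
    & forall (j : 'I_l.+1) u, ((Qs j)`_u != 0)%R -> u + n1 * j + n2 * (l - j) < s * T].
Proof.
move=> count.
have mult_coefs_supp x p : p \notin mult_conditions -> mult_coefs x p = 0%R.
  by rewrite ffunE => /negPf ->.
have [|z [z_nz z_ker z_supp]] :=
  additive_ffun_kernel (D := low_wdeg_monomials) mult_coefsB mult_coefs_supp.
  have := card_low_wdeg_monomials; have := card_mult_conditions.
  have := sum_weights_double l n1 n2; lia.
exists (hpoly_of z); split.
- have [p zp] : exists p, z p != 0%R.
    by apply/existsP; apply: contraR z_nz => /existsPn z0; apply/eqP/ffunP => p;
      rewrite ffunE; apply/eqP/negbNE/z0.
  exists p.1; apply: contraNneq zp => /(congr1 (coefp p.2)) /=.
  by rewrite coef_poly ltn_ord coef0 inord_val -surjective_pairing => ->.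
- move=> i iL; rewrite mult_at_leastE => u v uv.
  have us : u < s by lia.
  have vs : v < s by lia.
  have := congr1 (fun f : {ffun _ -> F} => f ((Ordinal iL, Ordinal us), Ordinal vs)) z_ker.
  rewrite !ffunE inE /= uv.
  by have -> : widen_ord L_le_n (Ordinal iL) = i by apply: val_inj.
- move=> j u; rewrite coef_poly; case: ifP => uN; last by rewrite eqxx.
  apply: contraR => j_u; rewrite z_supp //; move: j_u; rewrite inE /= inordK //.
Qed.

End Interpolation.

Local Open Scope ring_scope.

Theorem proposition2 (F : finFieldType) (n k : nat)
  (alpha : 'I_n -> F) (v : 'I_n -> F)
  (c r : 'I_n -> F) (H1 H2 A B : {poly F}) (L tau tauL : nat) :
  let d : int := n%:Z - k%:Z + 1 in
  injective alpha ->
  (forall i, v i != 0) ->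
  (exists C : {poly F}, (size C <= k)%N /\ forall i, c i = v i * C.[alpha i]) ->
  let E := [set i | c i != r i] in
  let eps : nat := #|E| in
  d < 2 * eps%:Z ->
  let Lambda := \prod_(i in E) ('X - (alpha i)%:P) in
  coprimep H1 H2 ->
  Lambda = A * H1 + B * H2 ->
  H1 != 0 -> A != 0 ->
  (size A).-1%:Z = eps%:Z - (size H1).-1%:Z ->
  (B = 0 \/ (size B).-1%:Z <= eps%:Z - d + (size H1).-1%:Z) ->
  (L <= n)%N -> (0 < tau)%N -> (0 < tauL)%N ->
  let w1 : int := tau%:Z - (size H1).-1%:Z in
  let w2 : int := tau%:Z - d + (size H1).-1%:Z in
  0 <= w1 -> 0 <= w2 ->
  (L%:Z * (2 * tau%:Z - d) < tauL%:Z ^+ 2) ->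
  (exists (s l : nat) (Qs : 'I_l.+1 -> {poly F}),
      [/\ (0 < s)%N, (0 < l)%N, hpoly_nonzero Qs,
          (forall i : 'I_n, (i < L)%N ->
             mult_at_least Qs (alpha i) H2.[alpha i] (- H1.[alpha i]) s)
        & wdeg_lt Qs w1 w2 (s%:Z * tauL%:Z)])
  /\
  (let epsL : nat := #|[set i in E | (i < L)%N]| in
   eps = tau -> epsL = tauL ->
   forall (s l : nat) (Qs : 'I_l.+1 -> {poly F}),
     (0 < s)%N -> (0 < l)%N -> hpoly_nonzero Qs ->
     (forall i : 'I_n, (i < L)%N ->
        mult_at_least Qs (alpha i) H2.[alpha i] (- H1.[alpha i]) s) ->
     wdeg_lt Qs w1 w2 (s%:Z * tauL%:Z) ->
     hsubst Qs A B = 0).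
Proof.
move=> d alpha_inj _ _ E eps _ Lambda cop Lambda_eq _ _ szA szB L_le_n _ tauL_gt0
  w1 w2 w1_ge0 w2_ge0 count.
have [n1 w1E] : exists n1 : nat, w1 = n1%:Z by exists `|w1|%N; rewrite gez0_abs.
have [n2 w2E] : exists n2 : nat, w2 = n2%:Z by exists `|w2|%N; rewrite gez0_abs.
have LW_lt : (L * (n1 + n2) < tauL ^ 2)%N.
  have w12 : w1 + w2 = 2 * tau%:Z - d by rewrite /w1 /w2; ring.
  by move: count; rewrite -w12 w1E w2E; clear; nia.
split.
- have [s [l [s_gt0 l_gt0 count_sl]]] := exists_interpolation_params tauL_gt0 LW_lt.
  have [Qs [Q_nz Q_mult Q_wdeg]] := exists_interpolation alpha H1 H2 L_le_n count_sl.
  exists s, l, Qs; split=> // j u /Q_wdeg; rewrite w1E w2E; clear; lia.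
- move=> epsL eps_tau epsL_tauL s l Qs _ _ _ Q_mult Q_wdeg.
  apply: (hsubst_eq0 (P := [set i in E | (i < L)%N]) alpha_inj cop).
  + move=> i; rewrite inE => /andP[iE _].
    have : Lambda.[alpha i] = 0.
      by rewrite /Lambda horner_prod (bigD1 i) //= hornerXsubC subrr mul0r.
    by rewrite Lambda_eq hornerD !hornerM.
  + by move=> i; rewrite inE => /andP[_ iL]; apply: Q_mult.
  + apply: (size_hsubst_leq (n1 := n1) (n2 := n2)).
    * by move: szA w1E; rewrite /w1 -eps_tau; move: (size A).-1 (size H1).-1 => a h; lia.
    * case: szB => [->|]; first by rewrite size_poly0.
      by move: w2E; rewrite /w2 -eps_tau; move: (size B).-1 (size H1).-1 => b h; lia.
    * move=> j u /Q_wdeg; rewrite w1E w2E -epsL_tauL /epsL; move: #|_| => t; nia.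
Qed.
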